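(* In the setting of the context, at every stage $k\in\{0,\dots,K\}$ (and for every fixed sequence of observed values $f_1,\dots,f_k$) there exists a set $\{\alpha_k^i\}$ of row vectors $\alpha_k^i\in\mathbb{R}^{1\times L}$ such that $\bar{J}_k(\varpi)=\min_i[\alpha_k^i\varpi]$ for all $\varpi$ in the probability simplex, with $\{\alpha_K^i\}\triangleq\{Q_j^T\}_{j=1}^L$.
   Context: There are $L$ classes $c_1,\dots,c_L$ with class variable $\mathcal{C}$, and features $F_1,\dots,F_K$ with finitely many values, jointly distributed with $\mathcal{C}$. Let $e_k>0$ be feature evaluation costs, $Q_{ij}\geqslant 0$ misclassification costs, $Q_j=[Q_{1j},\dots,Q_{Lj}]^T$, and on the simplex $\Sigma=\{\varpi\in[0,1]^L:\sum_i\omega_i=1\}$ let $g(\varpi)=\min_{1\leqslant j\leqslant L}Q_j^T\varpi$. Let $\Delta(f_{k+1}\mid f_1,\dots,f_k)=[P(F_{k+1}=f_{k+1}\mid F_1=f_1,\dots,F_k=f_k,\mathcal{C}=c_i)]_{i=1}^L$. Define recursively $\bar{J}_K(\varpi)=g(\varpi)$ and, for $k=K-1,\dots,0$, $\bar{J}_k(\varpi)=\min[g(\varpi),\mathcal{A}_k(\varpi)]$, where $$\mathcal{A}_k(\varpi)=e_{k+1}+\sum_{f_{k+1}}\Delta^T(f_{k+1}\mid f_1,\dots,f_k)\varpi\;\bar{J}_{k+1}\!\left(\frac{\operatorname{diag}(\Delta(f_{k+1}\mid f_1,\dots,f_k))\varpi}{\Delta^T(f_{k+1}\mid f_1,\dots,f_k)\varpi}\right),$$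 the sum being over the possible values of $F_{k+1}$, $\bar{J}_{k+1}$ being the corresponding function for the history $f_1,\dots,f_{k+1}$, and a summand whose factor $\Delta^T\varpi$ equals $0$ taken to be $0$. *)

From HB Require Import structures.
From mathcomp Require Import all_boot all_order all_algebra.
Set Implicit Arguments. Unset Strict Implicit. Unset Printing Implicit Defensive.
Import Order.TTheory GRing.Theory Num.Theory.
Local Open Scope ring_scope.

(* Classes c_1..c_L are indexed by 'I_L; features F_1..F_K take values in a
   common finite type V; the joint law of (C, F_1, ..., F_K) is the pmf
   P : 'I_L -> K.-tuple V -> R.  Vectors varpi are column vectors 'cV_L,
   alpha's are row vectors 'rV_L, and Q is the L x L matrix (Q_ij). *)

(* minimum of a (nonempty) finite list of reals; 0 on the empty list *)
Definition seqmin (R : realDomainType) (s : seq R) : R :=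
  match s with [::] => 0 | x :: t => foldr Num.min x t end.

Definition in_simplex (R : realDomainType) (L : nat) (w : 'cV[R]_L) : Prop :=
  (forall i, 0 <= w i 0) /\ \sum_i w i 0 = 1.

Definition is_pmf (R : realDomainType) (L K : nat) (V : finType)
  (P : 'I_L -> K.-tuple V -> R) : Prop :=
  (forall i t, 0 <= P i t) /\ \sum_i \sum_(t : K.-tuple V) P i t = 1.

Section Model.
Variables (R : realFieldType) (L K : nat) (V : finType).
Variable P : 'I_L -> K.-tuple V -> R.
Variable e : nat -> R.          (* e k = cost of evaluating feature F_k *)
Variable Q : 'M[R]_L.           (* Q i j = Q_ij, Q_j = col j Q *)

(* P(F_1 = h_1, ..., F_k = h_k, C = c_i), with k = size h *)
Definition Phist (h : seq V) (i : 'I_L) : R :=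
  \sum_(t : K.-tuple V | take (size h) t == h) P i t.

(* Delta(f | h) = [P(F_{k+1} = f | F_1..F_k = h, C = c_i)]_i  (x / 0 = 0) *)
Definition Delta (h : seq V) (f : V) : 'cV[R]_L :=
  \col_i (Phist (rcons h f) i / Phist h i).

Definition sc (a : 'rV[R]_L) (w : 'cV[R]_L) : R := (a *m w) 0 0.

Definition g (w : 'cV[R]_L) : R :=
  seqmin [seq sc (col j Q)^T w | j <- enum 'I_L].

Definition Aterm (h : seq V) (Jnext : seq V -> 'cV[R]_L -> R)
    (w : 'cV[R]_L) : R :=
  e (size h).+1 +
  \sum_(f : V)
    (if sc (Delta h f)^T w == 0 then 0
     else sc (Delta h f)^T w *
          Jnext (rcons h f)
            ((sc (Delta h f)^T w)^-1 *: (diag_mx (Delta h f)^T *m w))).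

(* Jrec m h = \bar J_{K-m} for the history h *)
Fixpoint Jrec (m : nat) (h : seq V) (w : 'cV[R]_L) : R :=
  match m with
  | 0 => g w
  | m'.+1 => Num.min (g w) (Aterm h (Jrec m') w)
  end.

Definition Jbar (k : nat) (h : seq V) (w : 'cV[R]_L) : R := Jrec (K - k) h w.

End Model.

From HB Require Import structures.
From mathcomp Require Import all_boot all_order all_algebra.
Import Order.TTheory GRing.Theory Num.Theory.
Local Open Scope ring_scope.

(* On the simplex, functions of the form
   [w |-> min_i alpha_i w] contain the constants (since [sum_i w_i = 1]) and
   are closed under [min], [+] and finite sums.  They are also closed under the
   Bayesian-update step [w |-> (D^T w) F (diag(D) w / D^T w)]: the factor
   [D^T w] is the total mass of [diag(D) w], so it cancels the normalization
   and each linear piece [b] of [F] becomes the linear piece [b diag(D)]. *)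

Lemma map_neq_nil (T U : eqType) (f : T -> U) (s : seq T) :
  (map f s != [::]) = (s != [::]).
Proof. by case: s. Qed.

Section SeqMin.
Context {R : realDomainType}.
Implicit Types (s : seq R) (x y c : R).

Lemma seqmin_le s x : x \in s -> seqmin s <= x.
Proof.
case: s => [//|y t] /=.
elim: t x => [|z t IH] x /=; first by rewrite inE => /eqP ->.
rewrite !inE => /orP [/eqP ->|/orP [/eqP ->|x_t]]; rewrite ge_min.
- by rewrite IH ?orbT // inE eqxx.
- by rewrite lexx.
- by rewrite IH ?orbT // inE x_t orbT.
Qed.

Lemma seqmin_mem s : s != [::] -> seqmin s \in s.
Proof.
case: s => [//|y t] _ /=.
elim: t => [|z t IH] /=; first by rewrite inE.
rewrite /Num.min; case: ifP => _; rewrite !inE ?eqxx ?orbT //.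
by move: IH; rewrite inE => /orP [->|->]; rewrite ?orbT.
Qed.

Lemma seqmin_eq s x : x \in s -> (forall y, y \in s -> x <= y) -> seqmin s = x.
Proof.
move=> x_s x_le; apply/le_anti; rewrite seqmin_le //=.
by apply/x_le/seqmin_mem; apply: contraTneq x_s => ->.
Qed.

Lemma seqmin_cat s1 s2 : s1 != [::] -> s2 != [::] ->
  seqmin (s1 ++ s2) = Num.min (seqmin s1) (seqmin s2).
Proof.
move=> s1_neq0 s2_neq0; apply: seqmin_eq.
  by rewrite /Num.min mem_cat; case: ifP; rewrite seqmin_mem ?orbT.
by move=> y; rewrite mem_cat ge_min => /orP [] /seqmin_le ->; rewrite ?orbT.
Qed.

Lemma seqmin_allpairsD s1 s2 : s1 != [::] -> s2 != [::] ->
  seqmin [seq x + y | x <- s1, y <- s2] = seqmin s1 + seqmin s2.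
Proof.
move=> s1_neq0 s2_neq0; apply: seqmin_eq.
  by apply: allpairs_f; apply: seqmin_mem.
by move=> _ /allpairsP [[x y] /= [x_s1 y_s2 ->]]; rewrite lerD ?seqmin_le.
Qed.

Lemma seqmin_map_pmul c s : 0 <= c ->
  seqmin [seq c * x | x <- s] = c * seqmin s.
Proof.
case: s => [|x0 s0] c_ge0; first by rewrite mulr0.
apply: seqmin_eq; first exact/map_f/seqmin_mem.
by move=> _ /mapP [x x_s ->]; rewrite ler_wpM2l ?seqmin_le.
Qed.

End SeqMin.

Section MinOfLinear.
Context {R : realFieldType} {L : nat}.
Implicit Types (v w D : 'cV[R]_L) (a b : 'rV[R]_L) (F G : 'cV[R]_L -> R).

Definition mass v : R := \sum_i v i 0.

Lemma mass_ge0 v : (forall i, 0 <= v i 0) -> 0 <= mass v.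
Proof. by move=> v_ge0; apply: sumr_ge0. Qed.

Lemma sc_trE D w : sc D^T w = mass (diag_mx D^T *m w).
Proof. by rewrite /sc mxE; apply: eq_bigr => i _; rewrite mul_diag_mx !mxE. Qed.

Lemma sc_const c w : in_simplex w -> sc (const_mx c) w = c.
Proof.
move=> [_ w_sum1]; rewrite /sc mxE -[RHS]mulr1 -w_sum1 mulr_sumr.
by apply: eq_bigr => i _; rewrite mxE.
Qed.

Lemma scD a b w : sc (a + b) w = sc a w + sc b w.
Proof. by rewrite /sc mulmxDl mxE. Qed.

Lemma sc_mulmx a (M : 'M[R]_L) w : sc (a *m M) w = sc a (M *m w).
Proof. by rewrite /sc mulmxA. Qed.

Lemma scZ a c w : sc a (c *: w) = c * sc a w.
Proof. by rewrite /sc -scalemxAr mxE. Qed.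

Lemma in_simplex_normalize v : (forall i, 0 <= v i 0) -> mass v != 0 ->
  in_simplex ((mass v)^-1 *: v).
Proof.
move=> v_ge0 mass_neq0; split=> [i|].
  by rewrite mxE mulr_ge0 ?invr_ge0 ?mass_ge0.
by under eq_bigr do rewrite mxE; rewrite -mulr_sumr mulVf.
Qed.

Lemma scale_mass_normalize v : (forall i, 0 <= v i 0) ->
  mass v *: ((mass v)^-1 *: v) = v.
Proof.
move=> v_ge0; have [mass0|mass_neq0] := eqVneq (mass v) 0.
  rewrite mass0 scale0r; apply/esym/matrixP => i j; rewrite (ord1 j) mxE.
  by move/psumr_eq0P: mass0 => ->.
by rewrite scalerA mulfV ?scale1r.
Qed.

Definition min_of_linear F :=
  exists2 A : seq 'rV[R]_L, A != [::] &
    forall w, in_simplex w -> F w = seqmin [seq sc a w | a <- A].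

Lemma eq_min_of_linear {F G} :
  min_of_linear F -> (forall w, F w = G w) -> min_of_linear G.
Proof. by move=> [A A_neq0 FA] FG; exists A => // w w_simplex; rewrite -FG FA. Qed.

Lemma min_of_linear_const c : min_of_linear (fun _ => c).
Proof. by exists [:: const_mx c] => // w w_simplex; rewrite /= sc_const. Qed.

Lemma min_of_linear_min {F G} : min_of_linear F -> min_of_linear G ->
  min_of_linear (fun w => Num.min (F w) (G w)).
Proof.
move=> [A A_neq0 FA] [B B_neq0 GB]; exists (A ++ B).
  by rewrite -size_eq0 size_cat addn_eq0 !size_eq0 negb_and A_neq0.
by move=> w w_simplex; rewrite FA // GB // map_cat seqmin_cat ?map_neq_nil.
Qed.

Lemma min_of_linear_add {F G} : min_of_linear F -> min_of_linear G ->
  min_of_linear (fun w => F w + G w).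
Proof.
move=> [A A_neq0 FA] [B B_neq0 GB]; exists [seq a + b | a <- A, b <- B].
  by rewrite -size_eq0 size_allpairs muln_eq0 !size_eq0 negb_or A_neq0.
move=> w w_simplex; rewrite FA // GB // -seqmin_allpairsD ?map_neq_nil //.
rewrite map_allpairs allpairs_mapl allpairs_mapr.
by congr seqmin; apply: eq_allpairs => a b; rewrite scD.
Qed.

Lemma min_of_linear_sum (I : Type) (r : seq I) (F : I -> 'cV[R]_L -> R) :
  (forall i, min_of_linear (F i)) ->
  min_of_linear (fun w => \sum_(i <- r) F i w).
Proof.
move=> F_min; elim: r => [|i r IH].
  by apply: eq_min_of_linear (min_of_linear_const 0) _ => w; rewrite big_nil.
by apply: eq_min_of_linear (min_of_linear_add (F_min i) IH) _ => w; rewrite big_cons.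
Qed.

Lemma min_of_linear_update D F : (forall i, 0 <= D i 0) -> min_of_linear F ->
  min_of_linear (fun w => if sc D^T w == 0 then 0
    else sc D^T w * F ((sc D^T w)^-1 *: (diag_mx D^T *m w))).
Proof.
move=> D_ge0 [B B_neq0 FB].
exists [seq b *m diag_mx D^T | b <- B]; first by rewrite map_neq_nil.
move=> w [w_ge0 _]; rewrite sc_trE.
set v := diag_mx D^T *m w; set c := mass v.
have v_ge0 i : 0 <= v i 0 by rewrite /v mul_diag_mx !mxE mulr_ge0.
have -> : [seq sc a w | a <- [seq b *m diag_mx D^T | b <- B]] =
          [seq c * x | x <- [seq sc b (c^-1 *: v) | b <- B]].
  rewrite -!map_comp; apply: eq_map => b /=.
  by rewrite sc_mulmx -scZ scale_mass_normalize.
rewrite seqmin_map_pmul ?mass_ge0 //; have [->|c_neq0] := eqVneq c 0.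
  by rewrite mul0r.
by rewrite FB //; apply: in_simplex_normalize.
Qed.

End MinOfLinear.

Section DynamicProgram.
Context {R : realFieldType} {L K : nat} {V : finType}.
Variables (P : 'I_L -> K.-tuple V -> R) (e : nat -> R) (Q : 'M[R]_L).
Hypotheses (L_gt0 : (0 < L)%N) (P_ge0 : forall i t, 0 <= P i t).

Definition terminal_alphas : seq 'rV[R]_L := [seq (col j Q)^T | j <- enum 'I_L].

Lemma terminal_alphas_neq_nil : terminal_alphas != [::].
Proof. by rewrite map_neq_nil -size_eq0 size_enum_ord -lt0n. Qed.

Lemma g_seqmin w : g Q w = seqmin [seq sc a w | a <- terminal_alphas].
Proof. by rewrite -map_comp. Qed.

Lemma min_of_linear_g : min_of_linear (g Q).
Proof.
by exists terminal_alphas => [|w _]; rewrite ?g_seqmin ?terminal_alphas_neq_nil.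
Qed.

Lemma Delta_ge0 h f i : 0 <= Delta P h f i 0.
Proof. by rewrite mxE divr_ge0 ?sumr_ge0. Qed.

Lemma min_of_linear_Jrec m h : min_of_linear (Jrec P e Q m h).
Proof.
elim: m h => [|m IH] h /=; first exact: min_of_linear_g.
apply: (min_of_linear_min min_of_linear_g).
apply: (min_of_linear_add (min_of_linear_const _)).
by apply: min_of_linear_sum => f; apply/min_of_linear_update/IH/Delta_ge0.
Qed.

End DynamicProgram.

Theorem theorem2 (R : realFieldType) (L K : nat) (V : finType)
  (P : 'I_L -> K.-tuple V -> R) (e : nat -> R) (Q : 'M[R]_L) :
  (0 < L)%N ->
  is_pmf P ->
  (forall k, (1 <= k <= K)%N -> 0 < e k) ->
  (forall i j, 0 <= Q i j) ->
  forall (k : nat) (h : seq V), (k <= K)%N -> size h = k ->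
  exists alphas : seq 'rV[R]_L,
    alphas != [::] /\
    (k = K -> alphas = [seq (col j Q)^T | j <- enum 'I_L]) /\
    forall w : 'cV[R]_L, in_simplex w ->
      Jbar P e Q k h w = seqmin [seq sc alpha w | alpha <- alphas].
Proof.
move=> L_gt0 [P_ge0 _] _ _ k h _ _.
have [->|k_neq_K] := eqVneq k K.
  exists (terminal_alphas Q); split; first exact: terminal_alphas_neq_nil.
  by split=> // w _; rewrite /Jbar subnn /= g_seqmin.
have [A A_neq0 JA] := min_of_linear_Jrec P e Q L_gt0 P_ge0 (K - k) h.
by exists A; split=> //; split=> // /eqP; rewrite (negbTE k_neq_K).
Qed.
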